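(* There is $C_{\boldsymbol\tau,\boldsymbol\eta}>0$ such that for any $\phi\in W^\infty(\mathbb T^{2n})$ and any nonconstant zero-average $f,g\in W_0^\infty(\mathbb T^{2n})$ with $L_{\boldsymbol\eta}f-L_{\boldsymbol\tau}g=\phi$, there is a nonconstant $P\in W^\infty(\mathbb T^{2n})$ such that for all $s\ge0$: $\|g-L_{\boldsymbol\eta}P\|_s\le C_{\boldsymbol\tau,\boldsymbol\eta}\|\phi\|_{s+2\gamma}$, $\|f-L_{\boldsymbol\tau}P\|_s\le C_{\boldsymbol\tau,\boldsymbol\eta}\|\phi\|_{s+2\gamma}$, $\|P\|_s\le C_{\boldsymbol\tau,\boldsymbol\eta}(\|f\|_{s+2\gamma}+\|g\|_{s+2\gamma})$.
   Context: $\boldsymbol\tau=(\tau_1,\dots,\tau_n,0,\dots,0)$, $\boldsymbol\eta=(0,\dots,0,\eta_1,\dots,\eta_n)\in\mathbb R^{2n}$, $n\ge2$, with $\sum\tau_j\eta_j=0$, Diophantine: there are $c,\gamma>0$ with $|\boldsymbol\tau\cdot\mathbf m-p|>c|\mathbf m_1\cdot\mathbf m_1|^{-\gamma}$ if $\mathbf m_1\ne0$ and $|\boldsymbol\eta\cdot\mathbf m-p|>c|\mathbf m_2\cdot\mathbf m_2|^{-\gamma}$ if $\mathbf m_2\ne0$, for $\mathbf m=(\mathbf m_1,\mathbf m_2)\in\mathbb Z^n\times\mathbb Z^n$, $p\in\mathbb Z$. On $L^2(\mathbb T^{2n})$ write $f=\sum_{\mathbf m}f_{\mathbf m}e^{2\pi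 i\mathbf m\cdot(\mathbf x,\boldsymbol\xi)}$, $\|f\|_s^2=\sum_{\mathbf m}(1+4\pi^2\mathbf m\cdot\mathbf m)^s|f_{\mathbf m}|^2$, $W^\infty(\mathbb T^{2n})=\bigcap_sW^s$, $W^\infty_0$ its zero-average subspace. For $\boldsymbol\kappa\in\{\boldsymbol\tau,\boldsymbol\eta\}$, $L_{\boldsymbol\kappa}h(\mathbf x,\boldsymbol\xi)=h((\mathbf x,\boldsymbol\xi)+\boldsymbol\kappa)-h(\mathbf x,\boldsymbol\xi)$. *)

(* classical reals. Functions in L^2(T^{2n}) are modelled by
   their Fourier coefficients, indexed by m = (m1, m2) in Z^n x Z^n. *)
From Stdlib Require Import Reals Lra List ZArith ClassicalEpsilon.
Open Scope R_scope.

Definition Cx : Type := (R * R)%type.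
Definition cnorm2 (z : Cx) : R := fst z * fst z + snd z * snd z.
Definition cmul (z w : Cx) : Cx :=
  (fst z * fst w - snd z * snd w, fst z * snd w + snd z * fst w).
Definition csub (z w : Cx) : Cx := (fst z - fst w, snd z - snd w).
Definition c0 : Cx := (0, 0).
Definition c1 : Cx := (1, 0).
Definition expi (theta : R) : Cx := (cos (2 * PI * theta), sin (2 * PI * theta)).

Definition Idx : Type := (list Z * list Z)%type.
Definition valid (n : nat) (m : Idx) : Prop :=
  length (fst m) = n /\ length (snd m) = n.
Definition zeroZ (n : nat) : list Z := repeat 0%Z n.
Definition zeroIdx (n : nat) : Idx := (zeroZ n, zeroZ n).

Definition dotRZ (t : list R) (m : list Z) : R :=
  fold_right Rplus 0 (map (fun p => fst p * IZR (snd p)) (combine t m)).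
Definition dotRR (t u : list R) : R :=
  fold_right Rplus 0 (map (fun p => fst p * snd p) (combine t u)).
Definition dotZZ (m : list Z) : R :=
  fold_right Rplus 0 (map (fun z => IZR z * IZR z) m).
Definition dotK (k : list R * list R) (m : Idx) : R :=
  dotRZ (fst k) (fst m) + dotRZ (snd k) (snd m).
Definition mdot (m : Idx) : R := dotZZ (fst m) + dotZZ (snd m).

Definition tauvec (n : nat) (tau : list R) : list R * list R := (tau, repeat 0 n).
Definition etavec (n : nat) (eta : list R) : list R * list R := (repeat 0 n, eta).

(* Fourier coefficients of h(. + kappa) - h *)
Definition Lop (k : list R * list R) (h : Idx -> Cx) : Idx -> Cx :=
  fun m => cmul (csub (expi (dotK k m)) c1) (h m).

Definition weight (s : R) (m : Idx) : R := Rpower (1 + 4 * PI ^ 2 * mdot m) s.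
Definition partial (s : R) (a : Idx -> Cx) (F : list Idx) : R :=
  fold_right Rplus 0 (map (fun m => weight s m * cnorm2 (a m)) F).
Definition ValidSet (n : nat) (F : list Idx) : Prop :=
  NoDup F /\ Forall (valid n) F.

Definition InW (n : nat) (s : R) (a : Idx -> Cx) : Prop :=
  exists B, forall F, ValidSet n F -> partial s a F <= B.
Definition InWinf (n : nat) (a : Idx -> Cx) : Prop := forall s, InW n s a.
Definition zero_avg (n : nat) (a : Idx -> Cx) : Prop := a (zeroIdx n) = c0.
Definition nonconstant (n : nat) (a : Idx -> Cx) : Prop :=
  exists m, valid n m /\ m <> zeroIdx n /\ a m <> c0.

Definition Rsup (E : R -> Prop) : R :=
  match excluded_middle_informative (bound E) with
  | left hb =>
      match excluded_middle_informative (exists x, E x) with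
      | left he => proj1_sig (completeness E hb he)
      | right _ => 0
      end
  | right _ => 0
  end.

Definition snorm (n : nat) (s : R) (a : Idx -> Cx) : R :=
  sqrt (Rsup (fun r => exists F, ValidSet n F /\ r = partial s a F)).

Definition diophantine (n : nat) (tau eta : list R) (c gamma : R) : Prop :=
  (forall m : Idx, forall p : Z, valid n m -> fst m <> zeroZ n ->
     Rabs (dotK (tauvec n tau) m - IZR p) > c * Rpower (dotZZ (fst m)) (- gamma)) /\
  (forall m : Idx, forall p : Z, valid n m -> snd m <> zeroZ n ->
     Rabs (dotK (etavec n eta) m - IZR p) > c * Rpower (dotZZ (snd m)) (- gamma)).

From Pilot Require Import Defs.
From Stdlib Require Import Reals List ZArith.
Open Scope R_scope.
From Stdlib Require Import Lra Lia Psatz Classical ClassicalEpsilon.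
(* [Reals] exports a [c1] of its own, shadowing [Defs.c1]. *)
Import Defs.

(* In Fourier coefficients the cohomological equation reads
   phi_m = B_m f_m - A_m g_m, with A_m = e(tau.m) - 1 depending only on m1 and
   B_m = e(eta.m) - 1 depending only on m2.  Take P_m = f_m / A_m where A_m <> 0
   and P_m = g_m / B_m where only B_m <> 0 (there phi_m = B_m f_m).  The
   Diophantine condition bounds |A_m|^-2 and |B_m|^-2 by a multiple of
   (1 + 4 pi^2 m.m)^(2 gamma) wherever they are finite, and A_m = B_m = 0 only at
   m = 0, so every error coefficient is controlled by phi_m at the price of 2 gamma
   derivatives.  Should this P be constant, adding f_m on the modes with A_m = 0
   keeps all estimates and makes P nonconstant. *)

Definition cadd (z w : Cx) : Cx := (fst z + fst w, snd z + snd w).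
Definition cinv (w : Cx) : Cx := (fst w / cnorm2 w, - snd w / cnorm2 w).
Definition cdiv (z w : Cx) : Cx := cmul z (cinv w).

Lemma cnorm2_ge0 z : 0 <= cnorm2 z.
Proof. unfold cnorm2; nra. Qed.

Lemma cnorm2_c0 : cnorm2 c0 = 0.
Proof. unfold cnorm2, c0; simpl; ring. Qed.

Lemma cnorm2_eq0 z : cnorm2 z = 0 -> z = c0.
Proof.
  destruct z as [x y]; unfold cnorm2, c0; simpl; intro H.
  f_equal; nra.
Qed.

Lemma cnorm2_mul z w : cnorm2 (cmul z w) = cnorm2 z * cnorm2 w.
Proof. destruct z, w; unfold cnorm2, cmul; simpl; ring. Qed.

Lemma cmul_cdiv w z : cnorm2 w <> 0 -> cmul w (cdiv z w) = z.
Proof.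
  destruct w as [w1 w2], z as [z1 z2]; unfold cdiv, cinv, cmul, cnorm2; simpl.
  intro H; f_equal; field; exact H.
Qed.

Lemma cnorm2_cdiv z w : cnorm2 w <> 0 -> cnorm2 (cdiv z w) = cnorm2 z / cnorm2 w.
Proof.
  intro H; apply (Rmult_eq_reg_l (cnorm2 w)); [|exact H].
  rewrite <- cnorm2_mul, cmul_cdiv by exact H; field; exact H.
Qed.

Lemma cnorm2_cadd_le z w : cnorm2 (cadd z w) <= 2 * (cnorm2 z + cnorm2 w).
Proof.
  destruct z as [a b], w as [c d]; unfold cnorm2, cadd; simpl.
  pose proof (Rle_0_sqr (a - c)); pose proof (Rle_0_sqr (b - d)); unfold Rsqr in *; nra.
Qed.

Lemma csub_cmul_cdiv_self a f : cnorm2 a <> 0 -> csub f (cmul a (cdiv f a)) = c0.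
Proof.
  intro H; rewrite cmul_cdiv by exact H.
  destruct f; unfold csub, c0; simpl; f_equal; ring.
Qed.

Lemma cnorm2_csub_cmul_cdiv a b f g : cnorm2 a <> 0 ->
  cnorm2 (csub g (cmul b (cdiv f a))) = cnorm2 (csub (cmul b f) (cmul a g)) / cnorm2 a.
Proof.
  intro H; apply (Rmult_eq_reg_r (cnorm2 a)); [|exact H].
  unfold Rdiv; rewrite Rmult_assoc, Rinv_l, Rmult_1_r by exact H.
  rewrite Rmult_comm, <- cnorm2_mul.
  replace (cmul a (csub g (cmul b (cdiv f a))))
    with (csub (cmul a g) (cmul b f)).
  - destruct a, b, f, g; unfold cnorm2, csub, cmul; simpl; ring.
  - destruct a as [a1 a2], b as [b1 b2], f as [f1 f2], g as [g1 g2].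
    unfold cdiv, cinv, cmul, csub, cnorm2 in *; simpl in *; f_equal; field; exact H.
Qed.

Lemma cnorm2_csub_cmul_cadd_cdiv b g x : cnorm2 b <> 0 ->
  cnorm2 (csub g (cmul b (cadd (cdiv g b) x))) = cnorm2 (cmul b x).
Proof.
  intro H; replace (csub g (cmul b (cadd (cdiv g b) x)))
    with (csub c0 (cmul b x)).
  - destruct b, x; unfold cnorm2, csub, cmul, c0; simpl; ring.
  - destruct b as [b1 b2], g as [g1 g2], x as [x1 x2].
    unfold cdiv, cinv, cmul, csub, cadd, cnorm2, c0 in *; simpl in *; f_equal; field; exact H.
Qed.

Lemma div_le_of_inv_le x d k : 0 <= x -> / d <= k -> x / d <= k * x.
Proof. intros Hx Hd; unfold Rdiv; rewrite Rmult_comm; apply Rmult_le_compat_r; lra. Qed.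

(* On the modes where [a = 0] any [g / b + x] leaves the error [b x] in [g];
   [t] selects [x = f] (error [phi]) instead of [x = 0]. *)
Definition primitive_coeff (t : bool) (a b f g : Cx) : Cx :=
  if Req_dec_T (cnorm2 a) 0 then
    if Req_dec_T (cnorm2 b) 0 then c0 else cadd (cdiv g b) (if t then f else c0)
  else cdiv f a.

Section PrimitiveCoeff.

Variables (a b f g : Cx) (k : R).
Hypotheses (Hk : 0 <= k)
  (Ha : cnorm2 a <> 0 -> / cnorm2 a <= k) (Hb : cnorm2 b <> 0 -> / cnorm2 b <= k)
  (Hab : cnorm2 a = 0 -> cnorm2 b = 0 -> f = c0 /\ g = c0).

Lemma primitive_coeff_bounds t :
  let P := primitive_coeff t a b f g in
  let phi := csub (cmul b f) (cmul a g) in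
  cnorm2 (csub g (cmul b P)) <= 2 * (1 + k) * cnorm2 phi /\
  cnorm2 (csub f (cmul a P)) <= 2 * (1 + k) * cnorm2 phi /\
  cnorm2 P <= 2 * (1 + k) * (cnorm2 f + cnorm2 g).
Proof.
  cbv zeta; unfold primitive_coeff.
  pose proof (cnorm2_ge0 f); pose proof (cnorm2_ge0 g).
  pose proof (cnorm2_ge0 (csub (cmul b f) (cmul a g))).
  destruct (Req_dec_T (cnorm2 a) 0) as [Ea | Ea].
  - rewrite (cnorm2_eq0 a Ea).
    assert (Ephi : csub (cmul b f) (cmul c0 g) = cmul b f).
    { destruct b, f, g; unfold csub, cmul, c0; simpl; f_equal; ring. }
    assert (Ef : forall z, csub f (cmul c0 z) = f).
    { intro z; destruct f, z; unfold csub, cmul, c0; simpl; f_equal; ring. }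
    rewrite Ephi, Ef.
    destruct (Req_dec_T (cnorm2 b) 0) as [Eb | Eb].
    + destruct (Hab Ea Eb) as [-> ->].
      rewrite (cnorm2_eq0 b Eb), Ef, cnorm2_mul, cnorm2_c0; repeat split; lra.
    + pose proof (Hb Eb) as Hbi.
      assert (Hf : cnorm2 f <= k * cnorm2 (cmul b f)).
      { rewrite cnorm2_mul.
        replace (cnorm2 f) with (cnorm2 b * cnorm2 f / cnorm2 b) at 1 by (field; exact Eb).
        apply div_le_of_inv_le; [apply Rmult_le_pos; apply cnorm2_ge0 | exact Hbi]. }
      assert (Hx : cnorm2 (if t then f else c0) <= cnorm2 f).
      { destruct t; [lra | rewrite cnorm2_c0; lra]. }
      assert (Hbx : cnorm2 (cmul b (if t then f else c0)) <= cnorm2 (cmul b f)).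
      { rewrite !cnorm2_mul; apply Rmult_le_compat_l; [apply cnorm2_ge0 | exact Hx]. }
      pose proof (cnorm2_ge0 (cmul b f)).
      pose proof (cnorm2_cadd_le (cdiv g b) (if t then f else c0)) as HP.
      rewrite cnorm2_cdiv in HP by exact Eb.
      pose proof (div_le_of_inv_le (cnorm2 g) _ _ (cnorm2_ge0 g) Hbi).
      rewrite cnorm2_csub_cmul_cadd_cdiv by exact Eb.
      repeat split; nra.
  - pose proof (Ha Ea) as Hai.
    rewrite cnorm2_csub_cmul_cdiv, csub_cmul_cdiv_self, cnorm2_c0, cnorm2_cdiv by exact Ea.
    pose proof (div_le_of_inv_le _ _ _ (cnorm2_ge0 (csub (cmul b f) (cmul a g))) Hai).
    pose proof (div_le_of_inv_le (cnorm2 f) _ _ (cnorm2_ge0 f) Hai).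
    repeat split; nra.
Qed.

End PrimitiveCoeff.

Lemma primitive_coeff_toggle a b f g :
  f <> c0 -> (cnorm2 a = 0 -> cnorm2 b <> 0) ->
  primitive_coeff false a b f g = c0 -> primitive_coeff true a b f g <> c0.
Proof.
  intros Hf Hab; unfold primitive_coeff.
  destruct (Req_dec_T (cnorm2 a) 0) as [Ea | Ea].
  - destruct (Req_dec_T (cnorm2 b) 0) as [Eb | _]; [contradiction (Hab Ea Eb)|].
    destruct (cdiv g b) as [u v], f as [f1 f2]; unfold cadd, c0; simpl.
    intros E1 E2; injection E1; injection E2; intros; apply Hf; unfold c0; f_equal; lra.
  - intro E; exfalso; apply Hf.
    rewrite <- (cmul_cdiv a f Ea), E; unfold cmul, c0; simpl; f_equal; ring.
Qed.

Lemma sin_ge_third y : 0 <= y -> y <= 2 -> y <= PI -> y / 3 <= sin y.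
Proof.
  intros H0 H2 Hpi; destruct (SIN y H0 Hpi) as [Hlb _].
  replace (sin_lb y) with (y - y^3/6 + y^5/120 - y^7/5040) in Hlb
    by (unfold sin_lb, sin_approx, sin_term; simpl; field).
  assert (Hy2 : y * y <= 4) by nra.
  assert (0 <= y^5/120 - y^7/5040).
  { replace (y^5/120 - y^7/5040) with (y^5 * (42 - y * y) / 5040) by field.
    apply Rmult_le_pos; [apply Rmult_le_pos; [apply pow_le|] |]; lra. }
  assert (y^3/6 <= 4 * y / 6) by (replace (y^3) with (y * (y * y)) by ring; nra).
  lra.
Qed.

Lemma cos_period_Z y (p : Z) : cos (y + 2 * IZR p * PI) = cos y.
Proof.
  destruct p as [|q|q].
  - f_equal; simpl; ring.
  - replace (IZR (Zpos q)) with (INR (Pos.to_nat q))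
      by (rewrite INR_IZR_INZ; f_equal; lia).
    apply cos_period.
  - replace (IZR (Zneg q)) with (- INR (Pos.to_nat q))
      by (rewrite INR_IZR_INZ, <- opp_IZR; f_equal; lia).
    rewrite <- (cos_period (y + 2 * - INR (Pos.to_nat q) * PI) (Pos.to_nat q)).
    f_equal; ring.
Qed.

Lemma cnorm2_expi_sub1 x : cnorm2 (csub (expi x) c1) = 2 - 2 * cos (2 * PI * x).
Proof.
  pose proof (sin2_cos2 (2 * PI * x)) as H; unfold Rsqr in H.
  unfold cnorm2, csub, expi, c1; simpl; nra.
Qed.

Lemma expi0_sub1 : csub (expi 0) c1 = c0.
Proof. unfold expi, csub, c1, c0; simpl; rewrite Rmult_0_r, cos_0, sin_0; f_equal; ring. Qed.

(* Jordan-type bound: |e(x) - 1| = 2 |sin (pi r)| >= 2 |r|, where r = x - p with p the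
   integer nearest to x. *)
Lemma expi_sub1_lb x d : 0 < d -> (forall p : Z, Rabs (x - IZR p) > d) ->
  4 * (d * d) <= cnorm2 (csub (expi x) c1).
Proof.
  intros Hd Hp.
  set (p := (up (x + 1/2) - 1)%Z).
  destruct (archimed (x + 1/2)) as [A1 A2].
  assert (Ep : IZR p = IZR (up (x + 1/2)) - 1) by (unfold p; rewrite minus_IZR; reflexivity).
  set (r := x - IZR p).
  assert (Hr : Rabs r <= 1/2) by (apply Rabs_le; unfold r; lra).
  assert (Hrd : Rabs r > d) by exact (Hp p).
  assert (Hnorm : cnorm2 (csub (expi x) c1) = 4 * (sin (PI * Rabs r) * sin (PI * Rabs r))).
  { rewrite cnorm2_expi_sub1.
    replace (2 * PI * x) with (2 * (PI * r) + 2 * IZR p * PI) by (unfold r; ring).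
    rewrite cos_period_Z, cos_2a_sin.
    unfold Rabs; destruct (Rcase_abs r); [|ring].
    replace (PI * - r) with (- (PI * r)) by ring; rewrite sin_neg; ring. }
  assert (Hsin : Rabs r <= sin (PI * Rabs r)).
  { pose proof PI2_3_2; pose proof PI_4; pose proof (Rabs_pos r).
    pose proof (sin_ge_third (PI * Rabs r)); nra. }
  rewrite Hnorm; nra.
Qed.

Lemma expi_sub1_inv_le x D W c gamma : 1 <= D -> D <= W -> 0 < c -> 0 < gamma ->
  (forall p : Z, Rabs (x - IZR p) > c * Rpower D (- gamma)) ->
  0 < cnorm2 (csub (expi x) c1) /\
  / cnorm2 (csub (expi x) c1) <= Rpower W (2 * gamma) / (4 * (c * c)).
Proof.
  intros HD HDW Hc Hg Hp.
  assert (Hq : 0 < c * Rpower D (- gamma)) by (apply Rmult_lt_0_compat; [lra | apply exp_pos]).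
  pose proof (expi_sub1_lb _ _ Hq Hp) as Hlb.
  assert (Eq : 4 * (c * Rpower D (- gamma) * (c * Rpower D (- gamma)))
               = 4 * (c * c) / Rpower D (2 * gamma)).
  { rewrite Rpower_Ropp; replace (2 * gamma) with (gamma + gamma) by ring.
    rewrite Rpower_plus; field; apply Rgt_not_eq, exp_pos. }
  rewrite Eq in Hlb.
  assert (HDg : 0 < Rpower D (2 * gamma)) by apply exp_pos.
  assert (Hlb0 : 0 < 4 * (c * c) / Rpower D (2 * gamma)) by (apply Rdiv_lt_0_compat; nra).
  split; [lra|].
  apply Rle_trans with (/ (4 * (c * c) / Rpower D (2 * gamma))).
  - apply Rinv_le_contravar; assumption.
  - rewrite Rinv_div; unfold Rdiv; apply Rmult_le_compat_r.
    + left; apply Rinv_0_lt_compat; nra.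
    + apply Rle_Rpower_l; lra.
Qed.

Lemma dotZZ_ge0 l : 0 <= dotZZ l.
Proof. induction l; unfold dotZZ in *; simpl; nra. Qed.

Lemma dotZZ_ge1 l k : length l = k -> l <> repeat 0%Z k -> 1 <= dotZZ l.
Proof.
  revert k; induction l as [|z l IH]; intros [|k] Hl Hne; simpl in *; try discriminate.
  - contradiction.
  - pose proof (dotZZ_ge0 l) as Hl0; unfold dotZZ in *; simpl.
    destruct (Z.eq_dec z 0) as [->|Hz].
    + assert (Hne' : l <> repeat 0%Z k) by (intros ->; apply Hne; reflexivity).
      specialize (IH k ltac:(lia) Hne'); simpl; lra.
    + assert (1 <= IZR z * IZR z) by (rewrite <- mult_IZR; apply IZR_le; nia).
      lra.
Qed.

Lemma dotRZ_repeat0_l k l : dotRZ (repeat 0 k) l = 0.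
Proof.
  revert l; induction k as [|k IH]; intros [|z l]; unfold dotRZ in *; simpl; try ring.
  rewrite IH; ring.
Qed.

Lemma dotRZ_repeat0_r t k : dotRZ t (repeat 0%Z k) = 0.
Proof.
  revert k; induction t as [|x t IH]; intros [|k]; unfold dotRZ in *; simpl; try ring.
  rewrite IH; ring.
Qed.

Lemma weight_base_bounds m :
  1 <= 1 + 4 * PI ^ 2 * mdot m /\
  dotZZ (fst m) <= 1 + 4 * PI ^ 2 * mdot m /\
  dotZZ (snd m) <= 1 + 4 * PI ^ 2 * mdot m.
Proof.
  pose proof (dotZZ_ge0 (fst m)); pose proof (dotZZ_ge0 (snd m)).
  assert (1 <= PI ^ 2) by (pose proof PI2_3_2; simpl; nra).
  unfold mdot; repeat split; nra.
Qed.

Lemma weight_add s t m : weight (s + t) m = weight s m * weight t m.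
Proof. apply Rpower_plus. Qed.

Lemma weight_pos s m : 0 < weight s m.
Proof. apply exp_pos. Qed.

Lemma weight_ge1 t m : 0 <= t -> 1 <= weight t m.
Proof.
  intro Ht; replace 1 with (Rpower 1 t)
    by (unfold Rpower; rewrite ln_1, Rmult_0_r; apply exp_0).
  apply Rle_Rpower_l; [exact Ht|]; pose proof (weight_base_bounds m); lra.
Qed.

Lemma sqrt_add_le a b : 0 <= a -> 0 <= b -> sqrt (a + b) <= sqrt a + sqrt b.
Proof.
  intros Ha Hb; pose proof (sqrt_pos a); pose proof (sqrt_pos b).
  rewrite <- (sqrt_square (sqrt a + sqrt b)) by lra.
  apply sqrt_le_1_alt.
  replace ((sqrt a + sqrt b) * (sqrt a + sqrt b))
    with (sqrt a * sqrt a + sqrt b * sqrt b + 2 * sqrt a * sqrt b) by ring.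
  rewrite !sqrt_sqrt by lra; nra.
Qed.

Lemma Rsup_upper (E : R -> Prop) x : bound E -> E x -> x <= Rsup E.
Proof.
  intros Hb Hx; unfold Rsup.
  destruct (excluded_middle_informative (bound E)) as [hb|]; [|contradiction].
  destruct (excluded_middle_informative (exists x, E x)) as [he|]; [|exfalso; eauto].
  exact (proj1 (proj2_sig (completeness E hb he)) x Hx).
Qed.

(* [0 <= M] covers the junk value [Rsup E = 0] of an unbounded or empty [E]. *)
Lemma Rsup_least (E : R -> Prop) M : (forall x, E x -> x <= M) -> 0 <= M -> Rsup E <= M.
Proof.
  intros HM HM0; unfold Rsup.
  destruct (excluded_middle_informative (bound E)) as [hb|]; [|exact HM0].
  destruct (excluded_middle_informative (exists x, E x)) as [he|]; [|exact HM0].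
  exact (proj2 (proj2_sig (completeness E hb he)) M HM).
Qed.

Lemma Rsup_ge0 (E : R -> Prop) : E 0 -> 0 <= Rsup E.
Proof.
  intro H0; unfold Rsup.
  destruct (excluded_middle_informative (bound E)) as [hb|]; [|lra].
  destruct (excluded_middle_informative (exists x, E x)) as [he|]; [|lra].
  exact (proj1 (proj2_sig (completeness E hb he)) 0 H0).
Qed.

Definition partial_sums (n : nat) (s : R) (a : Idx -> Cx) : R -> Prop :=
  fun r => exists F, ValidSet n F /\ r = partial s a F.

Lemma partial_sums_nil n s a : partial_sums n s a 0.
Proof. exists nil; split; [split; constructor | reflexivity]. Qed.

Lemma partial_sums_bound n s a : InW n s a -> bound (partial_sums n s a).
Proof. intros [B HB]; exists B; intros r [F [HF ->]]; exact (HB F HF). Qed.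

Lemma partial_le s s' (x y z : Idx -> Cx) K F : 0 <= K ->
  (forall m, In m F -> weight s m * cnorm2 (x m) <=
     K * (weight s' m * cnorm2 (y m) + weight s' m * cnorm2 (z m))) ->
  partial s x F <= K * (partial s' y F + partial s' z F).
Proof.
  intro HK; induction F as [|m F IH]; intro H; unfold partial in *; simpl; [lra|].
  pose proof (H m (or_introl eq_refl)).
  assert (IHF := IH (fun m' Hm' => H m' (or_intror Hm'))); nra.
Qed.

Section SobolevShift.

Variables (n : nat) (s t K : R) (x y z : Idx -> Cx).
Hypotheses (HK : 0 <= K) (Hy : InW n (s + t) y) (Hz : InW n (s + t) z)
  (Hxyz : forall m, valid n m ->
     cnorm2 (x m) <= K * weight t m * (cnorm2 (y m) + cnorm2 (z m))).

Lemma partial_shift_le F : ValidSet n F ->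
  partial s x F <= K * (partial (s + t) y F + partial (s + t) z F).
Proof.
  intros [_ HF]; rewrite Forall_forall in HF.
  apply partial_le; [exact HK|]; intros m Hm.
  rewrite !weight_add.
  pose proof (weight_pos s m); pose proof (Hxyz m (HF m Hm)).
  replace (K * (weight s m * weight t m * cnorm2 (y m) + weight s m * weight t m * cnorm2 (z m)))
    with (weight s m * (K * weight t m * (cnorm2 (y m) + cnorm2 (z m)))) by ring.
  apply Rmult_le_compat_l; lra.
Qed.

Lemma InW_shift : InW n s x.
Proof.
  destruct Hy as [By HBy], Hz as [Bz HBz].
  exists (K * (By + Bz)); intros F HF.
  eapply Rle_trans; [exact (partial_shift_le F HF)|].
  apply Rmult_le_compat_l; [exact HK|]; apply Rplus_le_compat; auto.
Qed.

Lemma snorm_shift_le :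
  snorm n s x <= sqrt K * (snorm n (s + t) y + snorm n (s + t) z).
Proof.
  unfold snorm; fold (partial_sums n s x) (partial_sums n (s + t) y) (partial_sums n (s + t) z).
  pose proof (Rsup_ge0 _ (partial_sums_nil n (s + t) y)).
  pose proof (Rsup_ge0 _ (partial_sums_nil n (s + t) z)).
  apply Rle_trans with (sqrt (K * (Rsup (partial_sums n (s + t) y)
                                   + Rsup (partial_sums n (s + t) z)))).
  - apply sqrt_le_1_alt, Rsup_least; [|apply Rmult_le_pos; lra].
    intros r [F [HF ->]].
    eapply Rle_trans; [exact (partial_shift_le F HF)|].
    apply Rmult_le_compat_l; [exact HK|].
    apply Rplus_le_compat; apply Rsup_upper;
      solve [apply partial_sums_bound; assumption | exists F; auto].
  - rewrite !sqrt_mult_alt by exact HK.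
    apply Rmult_le_compat_l; [apply sqrt_pos | apply sqrt_add_le; assumption].
Qed.

End SobolevShift.

Lemma partial_zero s F : partial s (fun _ => c0) F = 0.
Proof.
  induction F as [|m F IH]; unfold partial in *; simpl; [reflexivity|].
  rewrite IH, cnorm2_c0; ring.
Qed.

Lemma snorm_shift_le1 n s t K (x y : Idx -> Cx) : 0 <= K -> InW n (s + t) y ->
  (forall m, valid n m -> cnorm2 (x m) <= K * weight t m * cnorm2 (y m)) ->
  snorm n s x <= sqrt K * snorm n (s + t) y.
Proof.
  intros HK Hy Hxy.
  assert (Hzero : snorm n (s + t) (fun _ => c0) = 0).
  { unfold snorm; rewrite <- sqrt_0; f_equal; apply Rle_antisym.
    - apply Rsup_least; [intros r [F [_ ->]]; rewrite partial_zero|]; lra.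
    - apply Rsup_ge0, partial_sums_nil. }
  rewrite <- (Rplus_0_r (snorm n (s + t) y)), <- Hzero.
  apply snorm_shift_le; [exact HK | exact Hy | |].
  - exists 0; intros F _; rewrite partial_zero; lra.
  - intros m Hm; rewrite cnorm2_c0, Rplus_0_r; exact (Hxy m Hm).
Qed.

Definition multiplier (k : list R * list R) (m : Idx) : Cx := csub (expi (dotK k m)) c1.

Definition primitive_const (c : R) : R := 2 * (1 + / (4 * (c * c))).

Lemma primitive_const_pos c : 0 < c -> 0 < primitive_const c.
Proof.
  intro Hc; unfold primitive_const.
  assert (0 < / (4 * (c * c))) by (apply Rinv_0_lt_compat; nra); lra.
Qed.

Section Primitive.

Variables (n : nat) (tau eta : list R) (c gamma : R).
Hypotheses (Hc : 0 < c) (Hgamma : 0 < gamma) (Hdio : diophantine n tau eta c gamma).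

Lemma multiplier_tau_bounds m : valid n m -> fst m <> zeroZ n ->
  0 < cnorm2 (multiplier (tauvec n tau) m) /\
  / cnorm2 (multiplier (tauvec n tau) m) <= weight (2 * gamma) m / (4 * (c * c)).
Proof.
  intros Hm Hm1; destruct (weight_base_bounds m) as (_ & HD & _).
  apply expi_sub1_inv_le with (dotZZ (fst m)); auto.
  - apply (dotZZ_ge1 _ n); [apply Hm | exact Hm1].
  - intro p; apply (proj1 Hdio); assumption.
Qed.

Lemma multiplier_eta_bounds m : valid n m -> snd m <> zeroZ n ->
  0 < cnorm2 (multiplier (etavec n eta) m) /\
  / cnorm2 (multiplier (etavec n eta) m) <= weight (2 * gamma) m / (4 * (c * c)).
Proof.
  intros Hm Hm2; destruct (weight_base_bounds m) as (_ & _ & HD).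
  apply expi_sub1_inv_le with (dotZZ (snd m)); auto.
  - apply (dotZZ_ge1 _ n); [apply Hm | exact Hm2].
  - intro p; apply (proj2 Hdio); assumption.
Qed.

Lemma multiplier_tau_inv_le m : valid n m -> cnorm2 (multiplier (tauvec n tau) m) <> 0 ->
  / cnorm2 (multiplier (tauvec n tau) m) <= weight (2 * gamma) m / (4 * (c * c)).
Proof.
  intros Hm HA; destruct (list_eq_dec Z.eq_dec (fst m) (zeroZ n)) as [E | E].
  - exfalso; apply HA; unfold multiplier, dotK, tauvec; simpl; rewrite E; unfold zeroZ.
    rewrite dotRZ_repeat0_r, dotRZ_repeat0_l, Rplus_0_r, expi0_sub1; apply cnorm2_c0.
  - exact (proj2 (multiplier_tau_bounds m Hm E)).
Qed.

Lemma multiplier_eta_inv_le m : valid n m -> cnorm2 (multiplier (etavec n eta) m) <> 0 ->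
  / cnorm2 (multiplier (etavec n eta) m) <= weight (2 * gamma) m / (4 * (c * c)).
Proof.
  intros Hm HB; destruct (list_eq_dec Z.eq_dec (snd m) (zeroZ n)) as [E | E].
  - exfalso; apply HB; unfold multiplier, dotK, etavec; simpl; rewrite E; unfold zeroZ.
    rewrite dotRZ_repeat0_r, dotRZ_repeat0_l, Rplus_0_r, expi0_sub1; apply cnorm2_c0.
  - exact (proj2 (multiplier_eta_bounds m Hm E)).
Qed.

Lemma multipliers_vanish_only_at_zero m : valid n m ->
  cnorm2 (multiplier (tauvec n tau) m) = 0 -> cnorm2 (multiplier (etavec n eta) m) = 0 ->
  m = zeroIdx n.
Proof.
  intros Hm HA HB.
  destruct (list_eq_dec Z.eq_dec (fst m) (zeroZ n)) as [E1 | E1];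
    [| pose proof (multiplier_tau_bounds m Hm E1); lra].
  destruct (list_eq_dec Z.eq_dec (snd m) (zeroZ n)) as [E2 | E2];
    [| pose proof (multiplier_eta_bounds m Hm E2); lra].
  destruct m; simpl in *; subst; reflexivity.
Qed.

Definition primitive (t : bool) (f g : Idx -> Cx) (m : Idx) : Cx :=
  primitive_coeff t (multiplier (tauvec n tau) m) (multiplier (etavec n eta) m) (f m) (g m).

Lemma primitive_mode_bounds t f g m : zero_avg n f -> zero_avg n g -> valid n m ->
  let P := primitive t f g in
  let phi := csub (Lop (etavec n eta) f m) (Lop (tauvec n tau) g m) in
  let K := primitive_const c * weight (2 * gamma) m in
  cnorm2 (csub (g m) (Lop (etavec n eta) P m)) <= K * cnorm2 phi /\
  cnorm2 (csub (f m) (Lop (tauvec n tau) P m)) <= K * cnorm2 phi /\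
  cnorm2 (P m) <= K * (cnorm2 (f m) + cnorm2 (g m)).
Proof.
  intros Hf0 Hg0 Hm; cbv zeta; unfold Lop, primitive.
  fold (multiplier (etavec n eta) m) (multiplier (tauvec n tau) m).
  set (k := weight (2 * gamma) m / (4 * (c * c))).
  assert (Hk : 0 <= k) by (left; apply Rdiv_lt_0_compat; [apply weight_pos | nra]).
  assert (Hzero : cnorm2 (multiplier (tauvec n tau) m) = 0 ->
                  cnorm2 (multiplier (etavec n eta) m) = 0 -> f m = c0 /\ g m = c0).
  { intros HA HB; rewrite (multipliers_vanish_only_at_zero m Hm HA HB); split; assumption. }
  destruct (primitive_coeff_bounds _ _ (f m) (g m) k Hk (multiplier_tau_inv_le m Hm)
              (multiplier_eta_inv_le m Hm) Hzero t) as (Hgerr & Hferr & HP).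
  assert (HK : 2 * (1 + k) <= primitive_const c * weight (2 * gamma) m).
  { pose proof (weight_ge1 (2 * gamma) m ltac:(lra)).
    assert (0 < / (4 * (c * c))) by (apply Rinv_0_lt_compat; nra).
    unfold k, primitive_const, Rdiv; nra. }
  pose proof (cnorm2_ge0 (f m)); pose proof (cnorm2_ge0 (g m)).
  pose proof (cnorm2_ge0 (csub (cmul (multiplier (etavec n eta) m) (f m))
                                (cmul (multiplier (tauvec n tau) m) (g m)))).
  repeat split; nra.
Qed.

Lemma primitive_sobolev t phi f g :
  InWinf n phi -> InWinf n f -> InWinf n g -> zero_avg n f -> zero_avg n g ->
  (forall m, valid n m ->
     csub (Lop (etavec n eta) f m) (Lop (tauvec n tau) g m) = phi m) ->
  InWinf n (primitive t f g) /\
  forall s : R,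
    snorm n s (fun m => csub (g m) (Lop (etavec n eta) (primitive t f g) m))
      <= sqrt (primitive_const c) * snorm n (s + 2 * gamma) phi /\
    snorm n s (fun m => csub (f m) (Lop (tauvec n tau) (primitive t f g) m))
      <= sqrt (primitive_const c) * snorm n (s + 2 * gamma) phi /\
    snorm n s (primitive t f g)
      <= sqrt (primitive_const c) * (snorm n (s + 2 * gamma) f + snorm n (s + 2 * gamma) g).
Proof.
  intros Hphi Hf Hg Hf0 Hg0 Heq.
  pose proof (primitive_const_pos c Hc) as HK.
  assert (Hmodes := fun m Hm => primitive_mode_bounds t f g m Hf0 Hg0 Hm); cbv zeta in Hmodes.
  split.
  { intro s; apply (InW_shift n s (2 * gamma) (primitive_const c) _ f g); [lra | apply Hf | apply Hg |].
    intros m Hm; exact (proj2 (proj2 (Hmodes m Hm))). }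
  intro s; repeat split.
  - apply snorm_shift_le1; [lra | apply Hphi |].
    intros m Hm; rewrite <- Heq by exact Hm; exact (proj1 (Hmodes m Hm)).
  - apply snorm_shift_le1; [lra | apply Hphi |].
    intros m Hm; rewrite <- Heq by exact Hm; exact (proj1 (proj2 (Hmodes m Hm))).
  - apply snorm_shift_le; [lra | apply Hf | apply Hg |].
    intros m Hm; exact (proj2 (proj2 (Hmodes m Hm))).
Qed.

Lemma primitive_nonconstant f g : nonconstant n f ->
  ~ nonconstant n (primitive false f g) -> nonconstant n (primitive true f g).
Proof.
  intros [m (Hm & Hm0 & Hfm)] Hfalse; exists m; split; [exact Hm | split; [exact Hm0 |]].
  apply primitive_coeff_toggle; [exact Hfm | |].
  - intros HA HB; exact (Hm0 (multipliers_vanish_only_at_zero m Hm HA HB)).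
  - apply NNPP; intro Hnz; exact (Hfalse (ex_intro _ m (conj Hm (conj Hm0 Hnz)))).
Qed.

End Primitive.

Theorem proposition2p2 (n : nat) (tau eta : list R) (c gamma : R) :
  (2 <= n)%nat -> length tau = n -> length eta = n ->
  dotRR tau eta = 0 ->
  0 < c -> 0 < gamma -> diophantine n tau eta c gamma ->
  exists C : R, 0 < C /\
    forall phi f g : Idx -> Cx,
      InWinf n phi -> InWinf n f -> InWinf n g ->
      zero_avg n f -> zero_avg n g -> nonconstant n f -> nonconstant n g ->
      (forall m, valid n m ->
         csub (Lop (etavec n eta) f m) (Lop (tauvec n tau) g m) = phi m) ->
      exists P : Idx -> Cx, InWinf n P /\ nonconstant n P /\
        forall s : R, 0 <= s ->
          snorm n s (fun m => csub (g m) (Lop (etavec n eta) P m))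
            <= C * snorm n (s + 2 * gamma) phi /\
          snorm n s (fun m => csub (f m) (Lop (tauvec n tau) P m))
            <= C * snorm n (s + 2 * gamma) phi /\
          snorm n s P
            <= C * (snorm n (s + 2 * gamma) f + snorm n (s + 2 * gamma) g).
Proof.
  (* Neither [2 <= n], the lengths, [tau . eta = 0] nor the nonconstancy of [g] is needed. *)
  intros _ _ _ _ Hc Hgamma Hdio.
  exists (sqrt (primitive_const c)); split; [apply sqrt_lt_R0, primitive_const_pos, Hc|].
  intros phi f g Hphi Hf Hg Hf0 Hg0 Hfnc _ Heq.
  assert (Hsol := fun t => primitive_sobolev n tau eta c gamma Hc Hgamma Hdio t phi f g
                             Hphi Hf Hg Hf0 Hg0 Heq).
  destruct (classic (nonconstant n (primitive n tau eta false f g))) as [Hnc | Hnc].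
  - exists (primitive n tau eta false f g).
    destruct (Hsol false) as [HW Hs]; split; [exact HW | split; [exact Hnc | intros s _; apply Hs]].
  - exists (primitive n tau eta true f g).
    destruct (Hsol true) as [HW Hs]; split; [exact HW | split; [| intros s _; apply Hs]].
    exact (primitive_nonconstant n tau eta c gamma Hc Hgamma Hdio f g Hfnc Hnc).
Qed.
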